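(* Let $\rho,\sigma$ be full-rank density operators on a finite-dimensional Hilbert space. For any $x\le\lambda_{\min}(\rho)$, $$\beta_{1-x}(\rho\|\sigma)=x\exp\bigl(-\widetilde D_{+\infty}(\rho\|\sigma)\bigr),\qquad 1-\beta_x(\rho\|\sigma)=x\exp\bigl(-\widetilde D_{-\infty}(\rho\|\sigma)\bigr),$$ $$\widehat\beta^{\mathrm R}_{1-x}(\rho\|\sigma)=x\exp\bigl(-D_{+\infty}(\rho\|\mathcal P_\rho(\sigma))\bigr),\qquad 1-\widehat\beta^{\mathrm R}_x(\rho\|\sigma)=x\exp\bigl(-D_{-\infty}(\rho\|\mathcal P_\rho(\sigma))\bigr).$$ Also, for any $x\le\lambda_{\min}(\mathcal P_\sigma(\rho))$, $$\widehat\beta^{\mathrm L}_{1-x}(\rho\|\sigma)=x\exp\bigl(-D_{+\infty}(\mathcal P_\sigma(\rho)\|\sigma)\bigr),\qquad 1-\widehat\beta^{\mathrm L}_x(\rho\|\sigma)=x\exp\bigl(-D_{-\infty}(\mathcal P_\sigma(\rho)\|\sigma)\bigr).$$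
   Context: $\beta_x(\rho\|\sigma)=\min\{\mathrm{Tr}(\sigma Q):0\le Q\le\mathbb1,\ \mathrm{Tr}(\rho Q)\ge1-x\}$. For $\tau=\sum_\lambda\lambda\Pi_\lambda$, $\mathcal P_\tau(X)=\sum_\lambda\Pi_\lambda X\Pi_\lambda$; $\widehat\beta^{\mathrm L}_x(\rho\|\sigma)=\beta_x(\mathcal P_\sigma(\rho)\|\sigma)$, $\widehat\beta^{\mathrm R}_x(\rho\|\sigma)=\beta_x(\rho\|\mathcal P_\rho(\sigma))$. $\widetilde D_{+\infty}(\rho\|\sigma)=\log\lambda_{\max}(\sigma^{-1/2}\rho\sigma^{-1/2})$ and $\widetilde D_{-\infty}(\rho\|\sigma)=-\log\lambda_{\max}(\rho^{-1/2}\sigma\rho^{-1/2})$ (the $\alpha\to\pm\infty$ limits of the minimal Rényi divergence); for commuting arguments these are written $D_{\pm\infty}$. $\exp$ and $\log$ share a base; $\lambda_{\min}$ is the smallest eigenvalue. *)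

From HB Require Import structures.
From mathcomp Require Import all_boot all_order all_algebra.
From mathcomp Require Import sesquilinear spectral.
From mathcomp Require Import complex.
From mathcomp Require Import boolp classical_sets reals sequences exp.

Set Implicit Arguments.
Unset Strict Implicit.
Unset Printing Implicit Defensive.

Import Order.TTheory GRing.Theory Num.Theory.
Local Open Scope ring_scope.
Local Open Scope classical_set_scope.
Local Open Scope complex_scope.
Local Open Scope sesquilinear_scope.

Section Defs.
Variable R : realType.
Local Notation C := R[i].

Definition psdmx n (A : 'M[C]_n) : Prop :=
  A \is hermsymmx /\ forall v : 'rV[C]_n, 0 <= (v *m A *m v ^t*) 0 0.

Definition loewner_le n (A B : 'M[C]_n) : Prop := psdmx (B - A).

Definition density n (rho : 'M[C]_n) : Prop := psdmx rho /\ \tr rho = 1.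

Definition full_rank n (A : 'M[C]_n) : Prop := \rank A = n.

Definition feasible_test n (x : R) (rho : 'M[C]_n) (Q : 'M[C]_n) : Prop :=
  loewner_le 0 Q /\ loewner_le Q 1%:M /\ ((1 - x)%:C <= \tr (rho *m Q)).

Definition beta n (x : R) (rho sigma : 'M[C]_n) : R :=
  inf [set complex.Re (\tr (sigma *m Q)) | Q in feasible_test x rho].

(* extreme eigenvalues of a Hermitian matrix (its eigenvalues are real) *)
Definition lambda_max n (A : 'M[C]_n) : R := sup [set r : R | eigenvalue A r%:C].
Definition lambda_min n (A : 'M[C]_n) : R := inf [set r : R | eigenvalue A r%:C].

Definition mxfun n (f : C -> C) (A : 'M[C]_n) : 'M[C]_n :=
  invmx (spectralmx A) *m diag_mx (map_mx f (spectral_diag A)) *m spectralmx A.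

Definition mx_inv_sqrt n (A : 'M[C]_n) : 'M[C]_n :=
  mxfun (fun z : C => ((Num.sqrt (complex.Re z))^-1)%:C) A.

(* max-/min-relative entropies (alpha -> +oo / -oo limits of the sandwiched
   Renyi divergence); exp and log are the natural ones (shared base). *)
Definition D_plus_infty n (rho sigma : 'M[C]_n) : R :=
  ln (lambda_max (mx_inv_sqrt sigma *m rho *m mx_inv_sqrt sigma)).
Definition D_minus_infty n (rho sigma : 'M[C]_n) : R :=
  - ln (lambda_max (mx_inv_sqrt rho *m sigma *m mx_inv_sqrt rho)).

Definition spectrum n (tau : 'M[C]_n) : seq C :=
  undup [seq spectral_diag tau 0 i | i <- enum 'I_n].

Definition eigenproj n (tau : 'M[C]_n) (a : C) : 'M[C]_n :=
  proj_ortho (eigenspace tau a).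

Definition pinching n (tau X : 'M[C]_n) : 'M[C]_n :=
  \sum_(a <- spectrum tau) (eigenproj tau a *m X *m eigenproj tau a).

Definition betaL n (x : R) (rho sigma : 'M[C]_n) : R :=
  beta x (pinching sigma rho) sigma.
Definition betaR n (x : R) (rho sigma : 'M[C]_n) : R :=
  beta x rho (pinching rho sigma).

End Defs.

(** For positive definite [A], [B] and [l := lambda_max (B^-1/2 A B^-1/2)], every
    [X >= 0] satisfies [Tr (A X) <= l Tr (B X)] (conjugate by [B^1/2] and compare
    with the top eigenvalue), and equality holds for the rank-one operator
    [w^* w] built from a top eigenvector, normalised so that [<w, B w> = 1].
    With [A = rho], [B = sigma], the test [(x / l) w^* w] is below [1]
    because [x <= lambda_min rho], and it meets [Tr (rho Q) >= x] with equality, so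
    [beta_(1-x) = x / l = x exp (- D_plus_infty)].  Exchanging the roles of [rho]
    and [sigma] and testing with [1 - x w^* w] gives the [D_minus_infty] formula,
    where unit traces turn the inequality for [1 - Q] into one for [Q].  Pinching
    by a Hermitian matrix preserves trace and positive definiteness, so the same
    two formulas give the pinched variants. *)

From HB Require Import structures.
From mathcomp Require Import all_boot all_order all_algebra.
From mathcomp Require Import sesquilinear spectral.
From mathcomp Require Import complex.
From mathcomp Require Import boolp classical_sets reals sequences exp.

Set Implicit Arguments.
Unset Strict Implicit.
Unset Printing Implicit Defensive.
Import Order.TTheory GRing.Theory Num.Theory.
Local Open Scope complex_scope.
Local Open Scope ring_scope.
Local Open Scope classical_set_scope.
Local Open Scope sesquilinear_scope.

Lemma inf_eq_lb (R : realType) (E : set R) m : E m -> lbound E m -> inf E = m.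
Proof.
move=> Em m_lb; apply/eqP; rewrite eq_le; apply/andP; split.
  by apply: ge_inf => //; exists m.
by apply: lb_le_inf => //; exists m.
Qed.

Lemma sup_eq_ub (R : realType) (E : set R) m : E m -> ubound E m -> sup E = m.
Proof.
move=> Em m_ub; apply/eqP; rewrite eq_le; apply/andP; split.
  by apply: ge_sup => //; exists m.
by apply: ub_le_sup => //; exists m.
Qed.

Section MatrixAnalysis.
Variable R : realType.
Local Notation C := R[i].

Lemma conjC_real (r : R) : (r%:C)^* = r%:C.
Proof. by apply: conj_Creal; rewrite realE !lecE /= eqxx /= le_total. Qed.

Lemma Creal_ReE (z : C) : z \is Num.real -> z = (complex.Re z)%:C.
Proof.
case: z => a b; rewrite realE !lecE /= => /orP[] /andP[/eqP b0 _].
  by rewrite b0.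
by rewrite -b0.
Qed.

Lemma Re_realM (r : R) (z : C) : complex.Re (r%:C * z) = r * complex.Re z.
Proof. by case: z => a b; rewrite /= mul0r subr0. Qed.

Lemma le_Re_real (r : R) (z : C) : r%:C <= z -> r <= complex.Re z.
Proof. by rewrite lecE => /andP[]. Qed.

Lemma trmxC_mul m k p (X : 'M[C]_(m, k)) (Y : 'M[C]_(k, p)) :
  (X *m Y)^t* = Y^t* *m X^t*.
Proof. by rewrite trmx_mul map_mxM. Qed.

Lemma trmxC_sum n I (r : seq I) (F : I -> 'M[C]_n) :
  (\sum_(a <- r) F a)^t* = \sum_(a <- r) (F a)^t*.
Proof.
apply/matrixP => i j; rewrite !mxE !summxE rmorph_sum.
by apply: eq_bigr => a _; rewrite !mxE.
Qed.

Lemma hermsymmxP n (M : 'M[C]_n) : reflect (M^t* = M) (M \is hermsymmx).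
Proof. by apply: (iffP (is_hermitianmxP _ _ _)); rewrite expr0 scale1r => /esym. Qed.

Lemma hermsymmxB n (A B : 'M[C]_n) :
  A \is hermsymmx -> B \is hermsymmx -> (A - B) \is hermsymmx.
Proof.
move=> /hermsymmxP A_herm /hermsymmxP B_herm; apply/hermsymmxP.
by rewrite linearB /= map_mxB A_herm B_herm.
Qed.

Lemma hermsymmx1 n : (1%:M : 'M[C]_n) \is hermsymmx.
Proof. by apply/hermsymmxP; rewrite trmx1 map_mx1. Qed.

Lemma hermsymmxZ_real n (r : R) (A : 'M[C]_n) :
  A \is hermsymmx -> (r%:C *: A) \is hermsymmx.
Proof.
move=> /hermsymmxP A_herm; apply/hermsymmxP; rewrite linearZ /= map_mxZ A_herm.
by congr (_ *: _); apply: conjC_real.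
Qed.

Lemma hermsymmx_sandwich n (A T : 'M[C]_n) :
  A \is hermsymmx -> T^t* = T -> (T *m A *m T) \is hermsymmx.
Proof.
move=> /hermsymmxP A_herm T_herm; apply/hermsymmxP.
by rewrite !trmxC_mul T_herm A_herm mulmxA.
Qed.

Section QuadraticForm.
Variable n : nat.
Implicit Types (M N X T : 'M[C]_n) (u v : 'rV[C]_n).

Definition qform M v : C := (v *m M *m v^t*) 0 0.

Lemma qformv0 M : qform M 0 = 0.
Proof. by rewrite /qform !mul0mx mxE. Qed.

Lemma qformB M N v : qform (M - N) v = qform M v - qform N v.
Proof. by rewrite /qform mulmxBr mulmxBl !mxE. Qed.

Lemma qformZ M c v : qform (c *: M) v = c * qform M v.
Proof. by rewrite /qform -scalemxAr -scalemxAl mxE. Qed.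

Lemma qform_sum I (s : seq I) (F : I -> 'M[C]_n) v :
  qform (\sum_(a <- s) F a) v = \sum_(a <- s) qform (F a) v.
Proof. by rewrite /qform mulmx_sumr mulmx_suml summxE. Qed.

Lemma qform_conj T X v : qform (T *m X *m T^t*) v = qform X (v *m T).
Proof. by rewrite /qform trmxC_mul !mulmxA. Qed.

Lemma qform_diag (f : 'rV[C]_n) u :
  qform (diag_mx f) u = \sum_j f 0 j * (u 0 j * (u 0 j)^*).
Proof.
rewrite /qform mul_mx_diag !mxE; apply: eq_bigr => j _; rewrite !mxE.
by rewrite mulrCA mulrA.
Qed.

Lemma qform1 v : qform 1%:M v = dotmx v v.
Proof. by rewrite /qform mulmx1 dotmxE. Qed.

Lemma qform1_ge0 v : 0 <= qform 1%:M v.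
Proof. by rewrite qform1 dnorm_ge0. Qed.

Lemma qform1_gt0 v : v != 0 -> 0 < qform 1%:M v.
Proof. by rewrite qform1 dnorm_gt0. Qed.

Lemma qform_eigen M v a : v *m M = a *: v -> qform M v = a * qform 1%:M v.
Proof. by move=> v_eigen; rewrite /qform v_eigen mulmx1 -scalemxAl mxE. Qed.

Lemma qform_neq0 M v : qform M v = 1 -> v != 0.
Proof. by apply: contra_eqN => /eqP->; rewrite qformv0 eq_sym oner_neq0. Qed.

End QuadraticForm.

Lemma psdmx_of_qform n (M : 'M[C]_n) :
  M \is hermsymmx -> (forall v, 0 <= qform M v) -> psdmx M.
Proof. by split. Qed.

Lemma loewner_ge0E n (Q : 'M[C]_n) : loewner_le 0 Q = psdmx Q.
Proof. by rewrite /loewner_le subr0. Qed.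

(* Row-vector convention: the rows of a unitary [P] are eigenvectors of
   [udiag P f], acting on the right, with eigenvalues [f]. *)
Definition udiag n (P : 'M[C]_n) (f : 'rV[C]_n) : 'M[C]_n :=
  P^t* *m diag_mx f *m P.

Section Unitary.
Variables (n : nat) (P : 'M[C]_n).
Hypothesis P_unitary : P \is unitarymx.

Lemma mulmx_trC_unitary : P^t* *m P = 1%:M.
Proof. by rewrite -invmx_unitary // mulVmx // unitarymx_unit. Qed.

Lemma udiagM f g : udiag P f *m udiag P g = udiag P (\row_j (f 0 j * g 0 j)).
Proof.
rewrite /udiag -!mulmxA [P *m (_ *m _)]mulmxA (unitarymxP P_unitary) mul1mx.
by rewrite [diag_mx f *m _]mulmxA mulmx_diag.
Qed.

Lemma udiag_sum I (s : seq I) (F : I -> 'rV[C]_n) :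
  \sum_(a <- s) udiag P (F a) = udiag P (\sum_(a <- s) F a).
Proof. by rewrite /udiag raddf_sum mulmx_sumr mulmx_suml. Qed.

Lemma udiag1 : udiag P (const_mx 1) = 1%:M.
Proof.
rewrite /udiag (_ : diag_mx _ = 1%:M) ?mulmx1 ?mulmx_trC_unitary //.
by apply/matrixP => i j; rewrite !mxE.
Qed.

Lemma udiag_trC f : map_mx Num.conj f = f -> (udiag P f)^t* = udiag P f.
Proof.
move=> f_real; rewrite /udiag !trmxC_mul trmxCK tr_diag_mx map_diag_mx f_real.
by rewrite mulmxA.
Qed.

Lemma row_udiag f i : row i P *m udiag P f = f 0 i *: row i P.
Proof.
rewrite /udiag !mulmxA -[row i P *m _]row_mul (unitarymxP P_unitary) row1.
by rewrite -rowE row_diag_mx -scalemxAl -rowE.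
Qed.

Lemma qform_udiag f v : qform (udiag P f) v = qform (diag_mx f) (v *m P^t*).
Proof. by rewrite -qform_conj trmxCK. Qed.

Lemma qform1_unitary v :
  qform 1%:M v = \sum_j (v *m P^t*) 0 j * ((v *m P^t*) 0 j)^*.
Proof.
rewrite -udiag1 qform_udiag qform_diag.
by apply: eq_bigr => j _; rewrite mxE mul1r.
Qed.

Lemma qform_row X j : qform X (row j P) = (P *m X *m P^t*) j j.
Proof.
rewrite /qform !mxE; apply: eq_bigr => k _; rewrite !mxE; congr (_ * _).
by apply: eq_bigr => l _; rewrite !mxE.
Qed.

Lemma mxtrace_udiag_mul f X :
  \tr (udiag P f *m X) = \sum_j f 0 j * qform X (row j P).
Proof.
rewrite /udiag -!mulmxA mxtrace_mulC -!mulmxA mul_diag_mx.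
by apply: eq_bigr => j _; rewrite mxE qform_row mulmxA.
Qed.

End Unitary.

Definition spec_eig n (A : 'M[C]_n) (i : 'I_n) : R :=
  complex.Re (spectral_diag A 0 i).

(* Functional calculus of a real function on the real parts of the spectrum;
   meaningful for Hermitian [A], whose spectrum is real. *)
Definition mxfunR n (f : R -> R) (A : 'M[C]_n) : 'M[C]_n :=
  udiag (spectralmx A) (\row_i (f (spec_eig A i))%:C).

Section Hermitian.
Variables (n : nat) (A : 'M[C]_n).
Hypothesis A_herm : A \is hermsymmx.
Local Notation P := (spectralmx A).
Let P_unitary : P \is unitarymx := spectral_unitarymx A.

Lemma spectral_diag_real i : spectral_diag A 0 i = (spec_eig A i)%:C.
Proof.
by apply: Creal_ReE; have /mxOverP := hermitian_spectral_diag_real A_herm; apply.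
Qed.

Lemma mxfunR_id : mxfunR id A = A.
Proof.
have /orthomx_spectralP {2}-> := hermitian_normalmx A_herm.
rewrite (invmx_unitary P_unitary); apply: (congr1 (udiag P)).
by apply/rowP => i; rewrite mxE spectral_diag_real.
Qed.

Lemma row_spectral_eigen i : row i P *m A = (spec_eig A i)%:C *: row i P.
Proof. by rewrite -{2}mxfunR_id row_udiag // mxE. Qed.

Lemma qform1_row_spectral i : qform 1%:M (row i P) = 1.
Proof. by rewrite qform_row // mulmx1 (unitarymxP P_unitary) mxE eqxx. Qed.

Lemma qform_row_spectral i : qform A (row i P) = (spec_eig A i)%:C.
Proof. by rewrite (qform_eigen (row_spectral_eigen i)) qform1_row_spectral mulr1. Qed.

Lemma eigenvalue_spec_eig i : eigenvalue A (spec_eig A i)%:C.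
Proof.
apply/eigenvalueP; exists (row i P); first exact: row_spectral_eigen.
exact: qform_neq0 (qform1_row_spectral i).
Qed.

Lemma qform_le_spec_eig (c : R) : (forall i, spec_eig A i <= c) ->
  forall v, qform A v <= c%:C * qform 1%:M v.
Proof.
move=> c_ub v; rewrite -mxfunR_id qform_udiag qform_diag (qform1_unitary P_unitary).
rewrite mulr_sumr; apply: ler_sum => j _.
by rewrite ler_wpM2r ?mul_conjC_ge0 // mxE lecR.
Qed.

Lemma qform_ge_spec_eig (c : R) : (forall i, c <= spec_eig A i) ->
  forall v, c%:C * qform 1%:M v <= qform A v.
Proof.
move=> c_lb v; rewrite -mxfunR_id qform_udiag qform_diag (qform1_unitary P_unitary).
rewrite mulr_sumr; apply: ler_sum => j _.
by rewrite ler_wpM2r ?mul_conjC_ge0 // mxE lecR.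
Qed.

Lemma mxtrace_mul_spectral X :
  \tr (A *m X) = \sum_j (spec_eig A j)%:C * qform X (row j P).
Proof.
rewrite -{1}mxfunR_id mxtrace_udiag_mul //.
by apply: eq_bigr => j _; rewrite mxE.
Qed.

End Hermitian.

Section HermitianExtremal.
Variables (n : nat) (A : 'M[C]_n.+1).
Hypothesis A_herm : A \is hermsymmx.
Local Notation P := (spectralmx A).

Lemma lambda_max_spec :
  exists i, lambda_max A = spec_eig A i /\ forall j, spec_eig A j <= spec_eig A i.
Proof.
have [i _ i_max] := @arg_maxP _ _ _ ord0 predT (spec_eig A) isT.
exists i; split=> [|j]; last exact: i_max.
apply: sup_eq_ub; first exact: (eigenvalue_spec_eig A_herm).
move=> r /eigenvalueP[v v_eigen v_neq0].
have := qform_le_spec_eig A_herm (fun j => i_max j isT) v.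
by rewrite (qform_eigen v_eigen) ler_pM2r ?qform1_gt0 // lecR.
Qed.

Lemma lambda_min_spec :
  exists i, lambda_min A = spec_eig A i /\ forall j, spec_eig A i <= spec_eig A j.
Proof.
have [i _ i_min] := @arg_minP _ _ _ ord0 predT (spec_eig A) isT.
exists i; split=> [|j]; last exact: i_min.
apply: inf_eq_lb; first exact: (eigenvalue_spec_eig A_herm).
move=> r /eigenvalueP[v v_eigen v_neq0].
have := qform_ge_spec_eig A_herm (fun j => i_min j isT) v.
by rewrite (qform_eigen v_eigen) ler_pM2r ?qform1_gt0 // lecR.
Qed.

Lemma lambda_min_le_qform (x : R) : x <= lambda_min A ->
  forall v, x%:C * qform 1%:M v <= qform A v.
Proof.
move=> x_le v; have [i [lmin_eq i_min]] := lambda_min_spec.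
by apply: qform_ge_spec_eig => // j; rewrite (le_trans x_le) // lmin_eq.
Qed.

Lemma mxtrace_mul_le_lambda_max X : (forall v, 0 <= qform X v) ->
  \tr (A *m X) <= (lambda_max A)%:C * \tr X.
Proof.
move=> X_psd; have [i [-> i_max]] := lambda_max_spec.
rewrite mxtrace_mul_spectral // -[Y in _ * \tr Y]mul1mx.
rewrite -(udiag1 (spectral_unitarymx A)) mxtrace_udiag_mul ?spectral_unitarymx //.
rewrite mulr_sumr; apply: ler_sum => j _.
by rewrite mxE mul1r ler_wpM2r ?X_psd // lecR.
Qed.

Lemma lambda_max_attained :
  exists v, qform 1%:M v = 1 /\ qform A v = (lambda_max A)%:C.
Proof.
have [i [-> _]] := lambda_max_spec.
by exists (row i P); rewrite qform1_row_spectral (qform_row_spectral A_herm).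
Qed.

End HermitianExtremal.

Definition posdefmx n (M : 'M[C]_n) :=
  M \is hermsymmx /\ forall v, v != 0 -> 0 < qform M v.

Lemma posdefmx_spec_eig_gt0 n (M : 'M[C]_n) : posdefmx M -> forall i, 0 < spec_eig M i.
Proof.
move=> [M_herm M_pos] i; rewrite -ltcR -(qform_row_spectral M_herm).
exact/M_pos/qform_neq0/(qform1_row_spectral M i).
Qed.

Lemma posdefmx_spec_eig n (M : 'M[C]_n) :
  M \is hermsymmx -> (forall i, 0 < spec_eig M i) -> posdefmx M.
Proof.
move=> M_herm eig_gt0; split=> // v v_neq0.
case: n M v M_herm eig_gt0 v_neq0 => [|n] M v M_herm eig_gt0 v_neq0.
  by move: v_neq0; rewrite (thinmx0 v) eqxx.
have [i [_ i_min]] := lambda_min_spec M_herm.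
apply: lt_le_trans (qform_ge_spec_eig M_herm i_min v).
by rewrite mulr_gt0 ?ltcR ?qform1_gt0.
Qed.

Lemma density_full_rank_posdef n (M : 'M[C]_n) :
  density M -> full_rank M -> posdefmx M.
Proof.
move=> [[M_herm M_psd] _] M_full; apply: posdefmx_spec_eig => // i.
have eig_ge0 : 0 <= spec_eig M i.
  by rewrite -lecR -(qform_row_spectral M_herm); apply: M_psd.
rewrite lt_def eig_ge0 andbT; apply/eqP => eig0.
have M_unit : M \in unitmx by rewrite -row_free_unit /row_free M_full.
have := row_spectral_eigen M_herm i; rewrite eig0 scale0r.
move=> /(congr1 (mulmx^~ (invmx M))); rewrite mulmxK // mul0mx.
by apply/eqP/qform_neq0/(qform1_row_spectral M i).
Qed.

Section RealFunctionalCalculus.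
Variables (n : nat) (A : 'M[C]_n).
Let P_unitary : spectralmx A \is unitarymx := spectral_unitarymx A.

Lemma mxfunRM f g : mxfunR f A *m mxfunR g A = mxfunR (f \* g) A.
Proof.
rewrite /mxfunR (udiagM P_unitary); apply: (congr1 (udiag _)).
by apply/rowP => i; rewrite !mxE -rmorphM.
Qed.

Lemma mxfunR1 : mxfunR (fun=> 1) A = 1%:M.
Proof.
rewrite -(udiag1 P_unitary) /mxfunR; apply: (congr1 (udiag _)).
by apply/rowP => i; rewrite !mxE.
Qed.

Lemma mxfunR_trC f : (mxfunR f A)^t* = mxfunR f A.
Proof. by rewrite udiag_trC //; apply/rowP => i; rewrite !mxE conjC_real. Qed.

Lemma eq_mxfunR_posdef f g : posdefmx A ->
  (forall r, 0 < r -> f r = g r) -> mxfunR f A = mxfunR g A.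
Proof.
move=> A_pos fg; rewrite /mxfunR; apply: (congr1 (udiag _)); apply/rowP => i.
by rewrite !mxE fg // posdefmx_spec_eig_gt0.
Qed.

Lemma mx_inv_sqrtE : mx_inv_sqrt A = mxfunR (fun r => (Num.sqrt r)^-1) A.
Proof.
rewrite /mx_inv_sqrt /mxfun (invmx_unitary P_unitary).
by apply: (congr1 (udiag _)); apply/rowP => i; rewrite !mxE.
Qed.

Lemma mx_inv_sqrt_trC : (mx_inv_sqrt A)^t* = mx_inv_sqrt A.
Proof. by rewrite mx_inv_sqrtE mxfunR_trC. Qed.

End RealFunctionalCalculus.

Section SquareRoot.
Variables (n : nat) (B : 'M[C]_n).
Hypothesis B_posdef : posdefmx B.
Local Notation S := (mx_inv_sqrt B).
Local Notation T := (mxfunR Num.sqrt B).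

Lemma sqrtmx_inv_sqrt : T *m S = 1%:M.
Proof.
rewrite mx_inv_sqrtE mxfunRM -(mxfunR1 B); apply: eq_mxfunR_posdef => // r r_gt0.
by rewrite /= divff // lt0r_neq0 // sqrtr_gt0.
Qed.

Lemma inv_sqrt_sqrtmx : S *m T = 1%:M.
Proof.
rewrite mx_inv_sqrtE mxfunRM -(mxfunR1 B); apply: eq_mxfunR_posdef => // r r_gt0.
by rewrite /= mulVf // lt0r_neq0 // sqrtr_gt0.
Qed.

Lemma sqrtmx_sqr : T *m T = B.
Proof.
rewrite mxfunRM -{2}(mxfunR_id B_posdef.1); apply: eq_mxfunR_posdef => // r r_gt0.
by rewrite /= -expr2 sqr_sqrtr // ltW.
Qed.

End SquareRoot.

Section Sandwich.
Variables (n : nat) (A B S T : 'M[C]_n.+1).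
Hypotheses (A_herm : A \is hermsymmx) (S_herm : S^t* = S) (T_herm : T^t* = T).
Hypotheses (TS : T *m S = 1%:M) (ST : S *m T = 1%:M) (TT : T *m T = B).
Let N_herm : (S *m A *m S) \is hermsymmx := hermsymmx_sandwich A_herm S_herm.

Lemma mxtrace_mul_le_sandwich X : (forall v, 0 <= qform X v) ->
  \tr (A *m X) <= (lambda_max (S *m A *m S))%:C * \tr (B *m X).
Proof.
move=> X_psd.
have A_eq : A = T *m (S *m A *m S) *m T.
  by rewrite !mulmxA TS mul1mx -mulmxA ST mulmx1.
have -> : \tr (A *m X) = \tr (S *m A *m S *m (T *m X *m T)).
  by rewrite {1}A_eq -!mulmxA mxtrace_mulC -!mulmxA.
have -> : \tr (B *m X) = \tr (T *m X *m T).
  by rewrite -TT [RHS]mxtrace_mulC mulmxA.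
apply: (mxtrace_mul_le_lambda_max N_herm) => v.
by rewrite -{2}T_herm qform_conj.
Qed.

Lemma sandwich_witness :
  exists w, qform B w = 1 /\ qform A w = (lambda_max (S *m A *m S))%:C.
Proof.
have [v [v_norm v_top]] := lambda_max_attained N_herm.
exists (v *m S); rewrite -!qform_conj S_herm.
by rewrite -TT !mulmxA ST mul1mx TS.
Qed.

End Sandwich.

Section InverseSquareRoot.
Variables (n : nat) (A B : 'M[C]_n.+1).
Hypotheses (A_herm : A \is hermsymmx) (B_posdef : posdefmx B).
Let S_herm := mx_inv_sqrt_trC B.
Let T_herm := mxfunR_trC B Num.sqrt.
Let TS := sqrtmx_inv_sqrt B_posdef.
Let ST := inv_sqrt_sqrtmx B_posdef.
Let TT := sqrtmx_sqr B_posdef.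

Lemma mxtrace_mul_le_inv_sqrt X : (forall v, 0 <= qform X v) ->
  \tr (A *m X) <= (lambda_max (mx_inv_sqrt B *m A *m mx_inv_sqrt B))%:C * \tr (B *m X).
Proof. exact: mxtrace_mul_le_sandwich A_herm S_herm T_herm TS ST TT X. Qed.

Lemma inv_sqrt_witness : exists w,
  qform B w = 1 /\ qform A w = (lambda_max (mx_inv_sqrt B *m A *m mx_inv_sqrt B))%:C.
Proof. exact: sandwich_witness A_herm S_herm TS ST TT. Qed.

End InverseSquareRoot.

Section RankOne.
Variables (n : nat) (w : 'rV[C]_n).

Lemma hermsymmx_rank1 : (w^t* *m w) \is hermsymmx.
Proof. by apply/hermsymmxP; rewrite trmxC_mul trmxCK. Qed.

Lemma qform_rank1 u : qform (w^t* *m w) u = (u *m w^t*) 0 0 * ((u *m w^t*) 0 0)^*.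
Proof.
rewrite /qform mulmxA -mulmxA [in LHS]mxE big_ord1; congr (_ * _).
have -> : w *m u^t* = (u *m w^t*)^t* by rewrite trmxC_mul trmxCK.
by rewrite !mxE.
Qed.

Lemma mxtrace_mul_rank1 M : \tr (M *m (w^t* *m w)) = qform M w.
Proof. by rewrite mulmxA mxtrace_mulC trace_mx11 /qform mulmxA. Qed.

Lemma qform_rank1_le u : qform (w^t* *m w) u <= qform 1%:M u * qform 1%:M w.
Proof.
rewrite qform_rank1 !qform1 -dotmxE -normCK.
exact: (CauchySchwarz (@dotmx _ n) u w).1.
Qed.

Lemma psdmx_scale_rank1 (c : R) : 0 <= c -> psdmx (c%:C *: (w^t* *m w)).
Proof.
move=> c_ge0; apply: psdmx_of_qform => [|u]; first exact/hermsymmxZ_real/hermsymmx_rank1.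
by rewrite qformZ qform_rank1 mulr_ge0 ?lecR ?mul_conjC_ge0.
Qed.

Lemma psdmx_sub_rank1 (c : R) : 0 <= c -> c%:C * qform 1%:M w <= 1 ->
  psdmx (1%:M - c%:C *: (w^t* *m w)).
Proof.
move=> c_ge0 cw_le1; apply: psdmx_of_qform => [|u].
  exact/hermsymmxB/hermsymmxZ_real/hermsymmx_rank1/hermsymmx1.
rewrite qformB qformZ subr_ge0.
apply: le_trans (ler_wpM2l _ (qform_rank1_le u)) _; first by rewrite lecR.
by rewrite mulrCA ler_piMr // qform1_ge0.
Qed.

End RankOne.

Section TestBounds.
Variables (n : nat) (rho sigma : 'M[C]_n.+1).
Hypotheses (rho_posdef : posdefmx rho) (sigma_posdef : posdefmx sigma).
Hypotheses (rho_tr : \tr rho = 1) (sigma_tr : \tr sigma = 1).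

Lemma beta_D_plus_infty x : 0 <= x -> x <= lambda_min rho ->
  beta (1 - x) rho sigma = x * expR (- D_plus_infty rho sigma).
Proof.
move=> x_ge0 x_le.
have [w [w_sigma w_rho]] := inv_sqrt_witness rho_posdef.1 sigma_posdef.
rewrite /D_plus_infty; set l := lambda_max _ in w_rho *.
have l_gt0 : 0 < l.
  by rewrite -ltcR -w_rho; apply/rho_posdef.2/(qform_neq0 w_sigma).
have level : 1 - (1 - x) = x by rewrite opprB addrC subrK.
rewrite expRN lnK ?posrE // /beta; apply: inf_eq_lb.
  exists ((x / l)%:C *: (w^t* *m w)); last first.
    by rewrite -scalemxAr mxtraceZ mxtrace_mul_rank1 w_sigma mulr1.
  have xl_ge0 : 0 <= x / l by rewrite divr_ge0 // ltW.
  split; [|split].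
  - by rewrite loewner_ge0E; apply: psdmx_scale_rank1.
  - apply: psdmx_sub_rank1 => //.
    rewrite rmorphM fmorphV /= mulrAC ler_pdivrMr ?ltcR // mul1r -w_rho.
    exact: (lambda_min_le_qform rho_posdef.1 x_le).
  - rewrite level -scalemxAr mxtraceZ mxtrace_mul_rank1 w_rho -rmorphM lecR.
    by rewrite divfK // lt0r_neq0.
move=> _ [Q [+ [_ Q_rho]] <-]; rewrite loewner_ge0E => -[_ Q_psd].
have := mxtrace_mul_le_inv_sqrt rho_posdef.1 sigma_posdef Q_psd.
rewrite -/l => /(le_trans Q_rho); rewrite level => /le_Re_real.
by rewrite Re_realM ler_pdivrMr // mulrC.
Qed.

Lemma one_sub_beta_D_minus_infty x : 0 <= x -> x <= lambda_min rho ->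
  1 - beta x rho sigma = x * expR (- D_minus_infty rho sigma).
Proof.
move=> x_ge0 x_le.
have [w [w_rho w_sigma]] := inv_sqrt_witness sigma_posdef.1 rho_posdef.
rewrite /D_minus_infty; set l := lambda_max _ in w_sigma *.
have l_gt0 : 0 < l.
  by rewrite -ltcR -w_sigma; apply/sigma_posdef.2/(qform_neq0 w_rho).
rewrite [X in expR X]opprK lnK ?posrE //.
suff -> : beta x rho sigma = 1 - x * l by rewrite opprB addrC subrK.
rewrite /beta; apply: inf_eq_lb.
  exists (1%:M - x%:C *: (w^t* *m w)); last first.
    rewrite mulmxBr mulmx1 [\tr _]raddfB /= -scalemxAr mxtraceZ mxtrace_mul_rank1.
    by rewrite w_sigma sigma_tr -rmorphM.
  split; [|split].
  - rewrite loewner_ge0E; apply: psdmx_sub_rank1 => //.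
    by apply: le_trans (lambda_min_le_qform rho_posdef.1 x_le w) _; rewrite w_rho.
  - by rewrite /loewner_le opprB addrC subrK; apply: psdmx_scale_rank1.
  - rewrite mulmxBr mulmx1 [\tr _]raddfB /= -scalemxAr mxtraceZ mxtrace_mul_rank1.
    by rewrite w_rho rho_tr mulr1 rmorphB rmorph1.
move=> _ [Q [_ [[_ Q_le1] Q_rho]] <-].
have := mxtrace_mul_le_inv_sqrt sigma_posdef.1 rho_posdef Q_le1.
rewrite -/l !mulmxBr !mulmx1 ![\tr _]raddfB /= rho_tr sigma_tr => trace_le.
have rho_compl : 1 - \tr (rho *m Q) <= x%:C.
  by rewrite lerBlDr -lerBlDl -(rmorph1 (real_complex R)) -rmorphB.
have l_ge0 : 0 <= l%:C by rewrite lecR ltW.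
have := le_trans trace_le (ler_wpM2l l_ge0 rho_compl).
rewrite lerBlDr -lerBlDl -rmorphM -(rmorph1 (real_complex R)) -rmorphB.
by move=> /le_Re_real; rewrite mulrC.
Qed.

End TestBounds.

Section Pinching.
Variables (n : nat) (tau : 'M[C]_n).
Hypothesis tau_herm : tau \is hermsymmx.
Local Notation P := (spectralmx tau).
Local Notation d := (spectral_diag tau).
Let P_unitary : P \is unitarymx := spectral_unitarymx tau.

Definition eigen_indicator (a : C) : 'rV[C]_n := \row_j (d 0 j == a)%:R.

Lemma row_spectral_ortho_eigenspace a i : d 0 i != a ->
  row i P *m (eigenspace tau a)^t* = 0.
Proof.
move=> di_neq_a; set U := eigenspace tau a; set r := row i P.
have U_eigen : U *m tau = a *: U by apply/eigenspaceP.
have r_eigen : tau *m r^t* = d 0 i *: r^t*.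
  have /hermsymmxP tau_trC := tau_herm.
  rewrite -{1}tau_trC -trmxC_mul (row_spectral_eigen tau_herm).
  by rewrite spectral_diag_real // linearZ /= map_mxZ /= conjC_real.
have : (a - d 0 i) *: (U *m r^t*) = 0.
  by rewrite scalerBl scalemxAl -U_eigen -mulmxA r_eigen -scalemxAr subrr.
move/eqP; rewrite scaler_eq0 subr_eq0 eq_sym (negbTE di_neq_a) /= => /eqP Ur0.
have -> : r *m U^t* = (U *m r^t*)^t* by rewrite (trmxC_mul U) trmxCK.
by rewrite Ur0 trmx0 map_mx0.
Qed.

Lemma eigenproj_udiag a : eigenproj tau a = udiag P (eigen_indicator a).
Proof.
have P_unit := spectral_unit tau.
rewrite -[LHS](mulKmx P_unit) -[RHS](mulKmx P_unit); congr (_ *m _).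
apply/row_matrixP => i; rewrite !row_mul row_udiag // mxE.
case: (eqVneq (d 0 i) a) => [di_a|di_neq_a].
  rewrite proj_ortho_id ?scale1r //; apply/eigenspaceP.
  by rewrite (row_spectral_eigen tau_herm) -spectral_diag_real // di_a.
rewrite proj_ortho_0 ?scale0r //; apply/orthomx1P.
exact: row_spectral_ortho_eigenspace.
Qed.

Lemma sum_eigen_indicator :
  \sum_(a <- spectrum tau) eigen_indicator a = const_mx 1.
Proof.
apply/matrixP => i j; rewrite summxE !mxE.
rewrite (bigD1_seq (d 0 j)) ?undup_uniq //=; last first.
  by rewrite mem_undup map_f // mem_enum.
rewrite mxE eqxx big1 ?addr0 // => a /negbTE.
by rewrite mxE eq_sym => ->.
Qed.

Lemma eigenproj_trC a : (eigenproj tau a)^t* = eigenproj tau a.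
Proof.
rewrite eigenproj_udiag udiag_trC //.
by apply/rowP => j; rewrite !mxE conjC_nat.
Qed.

Lemma sum_eigenproj : \sum_(a <- spectrum tau) eigenproj tau a = 1%:M.
Proof.
under eq_bigr => a _ do rewrite eigenproj_udiag.
by rewrite udiag_sum // sum_eigen_indicator udiag1.
Qed.

Lemma mxtrace_pinching X : \tr (pinching tau X) = \tr X.
Proof.
rewrite /pinching raddf_sum /=.
under eq_bigr => a _ do rewrite mxtrace_mulC mulmxA proj_ortho_proj.
by rewrite -raddf_sum /= -mulmx_suml sum_eigenproj mul1mx.
Qed.

Lemma pinching_posdef X : posdefmx X -> posdefmx (pinching tau X).
Proof.
move=> [X_herm X_pos]; split.
  apply/hermsymmxP; rewrite /pinching trmxC_sum; apply: eq_bigr => a _.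
  exact/hermsymmxP/(hermsymmx_sandwich X_herm (eigenproj_trC a)).
move=> v v_neq0; rewrite /pinching qform_sum.
under eq_bigr => a _ do rewrite -{2}(eigenproj_trC a) qform_conj.
have [v_ker|] := boolP (all (fun a => v *m eigenproj tau a == 0) (spectrum tau)).
  case/negP: v_neq0; rewrite -[v]mulmx1 -sum_eigenproj mulmx_sumr big1_seq //.
  by move=> a /andP[_ a_in]; apply/eqP; move/allP: v_ker; apply.
case/allPn => a a_in va_neq0.
rewrite (bigD1_seq a) ?undup_uniq //=; apply: ltr_wpDr; last exact: X_pos.
apply: sumr_ge0 => b _; have [->|vb_neq0] := eqVneq (v *m eigenproj tau b) 0.
  by rewrite qformv0.
exact/ltW/X_pos.
Qed.

End Pinching.

End MatrixAnalysis.

Theorem lemma7 (R : realType) (n : nat) (rho sigma : 'M[R[i]]_n) :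
  density rho -> density sigma -> full_rank rho -> full_rank sigma ->
  (forall x : R, 0 <= x -> x <= lambda_min rho ->
     [/\ beta (1 - x) rho sigma = x * expR (- D_plus_infty rho sigma),
         1 - beta x rho sigma = x * expR (- D_minus_infty rho sigma),
         betaR (1 - x) rho sigma
           = x * expR (- D_plus_infty rho (pinching rho sigma)) &
         1 - betaR x rho sigma
           = x * expR (- D_minus_infty rho (pinching rho sigma))]) /\
  (forall x : R, 0 <= x -> x <= lambda_min (pinching sigma rho) ->
     betaL (1 - x) rho sigma
       = x * expR (- D_plus_infty (pinching sigma rho) sigma) /\
     1 - betaL x rho sigma
       = x * expR (- D_minus_infty (pinching sigma rho) sigma)).
Proof.
case: n rho sigma => [|n] rho sigma rho_dens sigma_dens rho_full sigma_full.
  by case: rho_dens => _; rewrite (flatmx0 rho) mxtrace0 => /eqP; rewrite eq_sym oner_eq0.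
have rho_pos := density_full_rank_posdef rho_dens rho_full.
have sigma_pos := density_full_rank_posdef sigma_dens sigma_full.
have [[rho_herm _] [sigma_herm _]] := (rho_pos, sigma_pos).
have [[_ rho_tr] [_ sigma_tr]] := (rho_dens, sigma_dens).
have pinched_rho_pos := pinching_posdef sigma_herm rho_pos.
have pinched_sigma_pos := pinching_posdef rho_herm sigma_pos.
have pinched_rho_tr : \tr (pinching sigma rho) = 1 by rewrite mxtrace_pinching.
have pinched_sigma_tr : \tr (pinching rho sigma) = 1 by rewrite mxtrace_pinching.
rewrite /betaL /betaR; split=> x x_ge0 x_le; [split|split];
  first [exact: beta_D_plus_infty | exact: one_sub_beta_D_minus_infty].
Qed.
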